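(* For every positive integer $n$, $|M_e(\mathcal{D},n)-M_o(\mathcal{D},n)|\le 2$, and $M_e(\mathcal{D},n)=M_o(\mathcal{D},n)$ for infinitely many positive integers $n$.
   Context: $M_e(\mathcal{D},n)$ (resp. $M_o(\mathcal{D},n)$) is the number of partitions of $n$ into distinct parts with even (resp. odd) crank, where for a partition into distinct parts the crank is its largest part if $1$ is not a part, and is (number of parts) $-2$ if $1$ is a part. *)

From mathcomp Require Import all_boot all_order all_algebra.
Set Implicit Arguments. Unset Strict Implicit. Unset Printing Implicit Defensive.
Import Order.TTheory GRing.Theory Num.Theory.

(* A partition of n into distinct parts is a finite set S of positive
   integers with sum n; all parts are <= n, so S is a set of 'I_n.+1
   (values of the elements are the parts) not containing 0. *)
Definition dpart (n : nat) : {set {set 'I_n.+1}} :=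
  [set S : {set 'I_n.+1} | (ord0 \notin S) && (\sum_(i in S) (i : nat) == n)%N].

Definition largest_part n (S : {set 'I_n.+1}) : nat := \max_(i in S) (i : nat).

Definition has_one n (S : {set 'I_n.+1}) : bool := [exists i in S, (i : nat) == 1%N].

Definition dcrank n (S : {set 'I_n.+1}) : int :=
  if has_one S then (Posz #|S| - 2)%R else Posz (largest_part S).

Definition crank_even n (S : {set 'I_n.+1}) : bool := ~~ odd `|dcrank S|%N.

Definition Me (n : nat) : nat := #|[set S in dpart n | crank_even S]|.
Definition Mo (n : nat) : nat := #|[set S in dpart n | ~~ crank_even S]|.

From mathcomp Require Import all_boot all_order all_algebra zify ring.
Import Order.TTheory GRing.Theory Num.Theory.
Set Implicit Arguments. Unset Strict Implicit. Unset Printing Implicit Defensive.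

(* Splitting off the part 1 gives M_e(D,n) - M_o(D,n) = A(n) - D(n-1), where A(n)
   and D(n) sum (-1)^(largest part) and (-1)^(number of parts) over the partitions
   of n into distinct parts > 1.  Raising the largest part by one matches the
   partitions of n - 1 with those of n whose two largest parts are not consecutive,
   so A(n) + A(n-1) and D(n) - D(n-1) reduce, up to the partitions {} and {2}, to
   the same sums over "steep" partitions, whose two largest parts are consecutive.
   On these Franklin's involution reverses both signs and fixes only the staircases
   [k, 2k-1] and [k+1, 2k] (k > 1), of weights k(3k-1)/2 and k(3k+1)/2.  Hence D is
   a partial sum of Euler's pentagonal series and (-1)^n A(n) only jumps at
   pentagonal numbers; both are explicit between consecutive pentagonal numbers,
   so the difference stays within 2 and vanishes at n = k(3k-1)/2 + 1 for odd k. *)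

Lemma find_iota_min (p : pred nat) K x : p x -> x < K ->
  p (find p (iota 0 K)) /\ find p (iota 0 K) <= x.
Proof.
move=> px xK; have p_has : has p (iota 0 K) by apply/hasP; exists x; rewrite ?mem_iota.
have lt_find : find p (iota 0 K) < K by rewrite -{2}(size_iota 0 K) -has_find.
split; first by have := nth_find 0 p_has; rewrite nth_iota.
rewrite leqNgt; apply/negP => lt_x; have := before_find 0 lt_x.
by rewrite nth_iota ?px //; lia.
Qed.

Lemma find_iota_ge (p : pred nat) K k : (forall i, i < k -> ~~ p i) -> k <= K ->
  k <= find p (iota 0 K).
Proof.
move=> not_p kK; rewrite leqNgt; apply/negP => lt_k.
have p_has : has p (iota 0 K) by rewrite has_find size_iota; lia.
by have := nth_find 0 p_has; rewrite nth_iota ?(negbTE (not_p _ lt_k)) //; lia.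
Qed.

Lemma find_iotaE (p : pred nat) K k : (forall i, i < k -> ~~ p i) -> p k -> k < K ->
  find p (iota 0 K) = k.
Proof.
move=> not_p pk kK; apply/eqP; rewrite eqn_leq find_iota_ge ?(ltnW kK) // andbT.
by case: (find_iota_min pk kK).
Qed.

Lemma sum_sign_reversing_involution (R : numDomainType) (T : finType) (P : pred T)
    (f : T -> T) (F : T -> R) :
  (forall x, P x -> P (f x)) -> (forall x, P x -> f (f x) = x) ->
  (forall x, P x -> f x != x -> F (f x) = - F x)%R ->
  (\sum_(x | P x) F x = \sum_(x | P x && (f x == x)) F x)%R.
Proof.
move=> Pf fK Ff; rewrite (bigID (fun x => f x == x)) /= -[RHS]addr0; congr (_ + _)%R.
have moved_f x : P x && (f x != x) -> P (f x) && (f (f x) != f x).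
  by case/andP => Px fx; rewrite Pf // fK // eq_sym.
have sum_opp : (\sum_(x | P x && (f x != x)) F x = - \sum_(x | P x && (f x != x)) F x)%R.
  rewrite [LHS](reindex_onto f f) => [|x /andP [Px _]]; last exact: fK.
  rewrite -sumrN; apply: eq_big => x.
    apply/andP/idP => [[/moved_f mffx /eqP ffx] | mx]; first by rewrite ffx in mffx.
    by split; [apply: moved_f | rewrite fK //; case/andP: mx].
  case/andP => /andP [Pfx ne_ffx] /eqP ffx; rewrite ffx eq_sym in ne_ffx.
  by apply: Ff => //; rewrite -ffx Pf.
(* [s = - s] forces [s = 0] in characteristic zero. *)
by apply/eqP; rewrite -[_ == 0%R](mulrn_eq0 _ 2) mulr2n {2}sum_opp subrr.
Qed.

Lemma reindex_bij_on (R : Type) (idx : R) (op : Monoid.com_law idx) (T : finType)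
    (P Q : pred T) (f g : T -> T) (F : T -> R) :
  (forall x, Q x -> P (f x)) -> (forall x, P x -> Q (g x)) ->
  (forall x, Q x -> g (f x) = x) -> (forall x, P x -> f (g x) = x) ->
  \big[op/idx]_(x | P x) F x = \big[op/idx]_(x | Q x) F (f x).
Proof.
move=> PQf QPg gK fK; rewrite (reindex_onto f g) //; apply: eq_bigl => x.
by apply/andP/idP => [[Pfx /eqP <-] | Qx]; [apply: QPg | rewrite PQf ?gK].
Qed.

Lemma signr_mod2 (R : pzRingType) x y : x %% 2 = y %% 2 -> ((-1) ^+ x = (-1) ^+ y :> R)%R.
Proof. by move=> eq_xy; rewrite -(signr_odd _ x) -(signr_odd _ y) -!modn2 eq_xy. Qed.

Section PartsAsSets.

Variable N : nat.
Implicit Types (S T : {set 'I_N.+1}) (a x : nat).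

(* [inord x] is [ord0] when [x > N]; the bound keeps such [x] out of [S]. *)
Definition has_part S x := (x <= N) && (inord x \in S).

Lemma has_part_val S (i : 'I_N.+1) : has_part S i = (i \in S).
Proof. by rewrite /has_part inord_val -ltnS ltn_ord. Qed.

Lemma has_part_le S x : has_part S x -> x <= N.
Proof. by case/andP. Qed.

Lemma has_part_inord S x : has_part S x -> inord x \in S.
Proof. by case/andP. Qed.

Lemma eq_set_parts S T : has_part S =1 has_part T -> S = T.
Proof. by move=> eqST; apply/setP => i; rewrite -!has_part_val eqST. Qed.

Lemma has_part_set0 x : has_part set0 x = false.
Proof. by rewrite /has_part in_set0 andbF. Qed.

Lemma has_part_neq0 S x : has_part S x -> S != set0.
Proof. by apply: contraTneq => ->; rewrite has_part_set0. Qed.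

Lemma has_part_setU1 S a x : a <= N ->
  has_part (inord a |: S) x = (x == a) || has_part S x.
Proof.
move=> aN; rewrite /has_part in_setU1; case: (leqP x N) => xN /=.
  by rewrite -val_eqE /= !inordK.
by apply/esym/negbTE; lia.
Qed.

Lemma has_part_setD1 S a x : a <= N ->
  has_part (S :\ inord a) x = (x != a) && has_part S x.
Proof.
move=> aN; rewrite /has_part in_setD1; case: (leqP x N) => xN /=.
  by rewrite -val_eqE /= !inordK.
by rewrite andbF.
Qed.

Definition weight S := \sum_(i in S) (i : nat).

Lemma weight_set0 : weight set0 = 0.
Proof. exact: big_set0. Qed.

Lemma weight_setU1 S a : a <= N -> ~~ has_part S a ->
  weight (inord a |: S) = a + weight S.
Proof.
by move=> aN; rewrite /has_part aN => Sa; rewrite /weight big_setU1 //= inordK.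
Qed.

Lemma weight_setD1 S a : has_part S a -> weight S = a + weight (S :\ inord a).
Proof.
move=> Sa; rewrite /weight (big_setD1 (inord a)) ?has_part_inord //= inordK //.
by rewrite ltnS (has_part_le Sa).
Qed.

Lemma card_setU1_part S a : a <= N -> ~~ has_part S a -> #|inord a |: S| = #|S|.+1.
Proof. by move=> aN; rewrite /has_part aN cardsU1 => ->. Qed.

Lemma card_setD1_part S a : has_part S a -> #|S| = #|S :\ inord a|.+1.
Proof. by move=> Sa; rewrite (cardsD1 (inord a)) has_part_inord. Qed.

Lemma leq_part_weight S x : has_part S x -> x <= weight S.
Proof. by move=> Sx; rewrite (weight_setD1 Sx) leq_addr. Qed.

Lemma leq_parts_weight S x y : has_part S x -> has_part S y -> x != y ->
  x + y <= weight S.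
Proof.
move=> Sx Sy neq_xy; rewrite (weight_setD1 Sx) leq_add2l leq_part_weight //.
by rewrite has_part_setD1 ?(has_part_le Sx) // eq_sym neq_xy.
Qed.

Lemma leq_largest_part S x : has_part S x -> x <= largest_part S.
Proof.
move=> Sx; have := leq_bigmax_cond (F := fun i : 'I_N.+1 => i : nat) _ (has_part_inord Sx).
by rewrite inordK // ltnS (has_part_le Sx).
Qed.

Lemma has_largest_part S : S != set0 -> has_part S (largest_part S).
Proof.
rewrite -card_gt0 => /(@eq_bigmax_cond _ (mem S) (fun i : 'I_N.+1 => i : nat)) [i Si eq_i].
by rewrite /largest_part eq_i has_part_val.
Qed.

Lemma largest_partE S m : has_part S m -> (forall x, has_part S x -> x <= m) ->
  largest_part S = m.
Proof.
move=> Sm le_m; apply/eqP; rewrite eqn_leq leq_largest_part // andbT.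
by apply/bigmax_leqP => i Si; rewrite le_m ?has_part_val.
Qed.

Definition smallest_part S := find (has_part S) (iota 0 N.+1).

Lemma smallest_part_min S x : has_part S x ->
  has_part S (smallest_part S) /\ smallest_part S <= x.
Proof. by move=> Sx; apply: find_iota_min; rewrite // ltnS (has_part_le Sx). Qed.

Lemma smallest_partE S s : has_part S s -> (forall x, has_part S x -> s <= x) ->
  smallest_part S = s.
Proof.
move=> Ss le_s; have [Smin le_min] := smallest_part_min Ss.
by apply/eqP; rewrite eqn_leq le_min le_s.
Qed.

(* The number of consecutive parts going down from the largest one; when [0] is
   not a part, the truncated [largest_part S - i] ends the search in time. *)
Definition slope S := find (fun i => ~~ has_part S (largest_part S - i)) (iota 0 N.+1).

Lemma slope_spec S : S != set0 -> ~~ has_part S 0 ->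
  [/\ ~~ has_part S (largest_part S - slope S), slope S <= largest_part S
    & forall i, i < slope S -> has_part S (largest_part S - i)].
Proof.
move=> S_neq0 S0; have m_lt : largest_part S < N.+1.
  by rewrite ltnS (has_part_le (has_largest_part S_neq0)).
have gap_m : ~~ has_part S (largest_part S - largest_part S) by rewrite subnn.
have [gap le_m] : ~~ has_part S (largest_part S - slope S) /\ slope S <= largest_part S.
  exact: (find_iota_min (p := fun i => ~~ has_part S (largest_part S - i)) gap_m m_lt).
split=> // i lt_i; have := before_find 0 lt_i.
rewrite nth_iota ?add0n; last lia.
by move/negbFE.
Qed.

Lemma slope_ge S k : (forall i, i < k -> has_part S (largest_part S - i)) ->
  k <= N.+1 -> k <= slope S.
Proof. by move=> Sk kN; apply: find_iota_ge => // i /Sk ->. Qed.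

Lemma slopeE S k : (forall i, i < k -> has_part S (largest_part S - i)) ->
  ~~ has_part S (largest_part S - k) -> k <= N -> slope S = k.
Proof. by move=> Sk gap kN; apply: find_iotaE => // i /Sk ->. Qed.

Definition segment a k : {set 'I_N.+1} := [set i : 'I_N.+1 | a <= i < a + k].

Lemma has_part_segment a k x : has_part (segment a k) x = (x <= N) && (a <= x < a + k).
Proof. by rewrite /has_part in_set; case: (leqP x N) => //= xN; rewrite inordK. Qed.

Lemma weight_card_segment a k : a + k <= N.+1 ->
  weight (segment a k) = \sum_(i < k) (a + i) /\ #|segment a k| = k.
Proof.
elim: k => [|k IHk] akN.
  have -> : segment a 0 = set0.
    by apply: eq_set_parts => x; rewrite has_part_segment has_part_set0; lia.
  by rewrite weight_set0 cards0 big_ord0.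
have -> : segment a k.+1 = inord (a + k) |: segment a k.
  by apply: eq_set_parts => x; rewrite has_part_setU1 ?has_part_segment; lia.
have a_k : ~~ has_part (segment a k) (a + k) by rewrite has_part_segment; lia.
have akN' : a + k <= N by lia.
have [IHw IHc] := IHk (leqW akN').
by rewrite weight_setU1 // card_setU1_part // IHw IHc big_ord_recr addnC.
Qed.

End PartsAsSets.

(* k(3k-1)/2 and k(3k+1)/2, as the weights of the staircases [k, 2k-1] and [k+1, 2k]. *)
Definition pent k := \sum_(i < k) (k + i).
Definition pentp k := \sum_(i < k) (k.+1 + i).
Definition pentagonal m := exists k, m = pent k \/ m = pentp k.

Lemma pentpE k : pentp k = pent k + k.
Proof.
rewrite /pentp /pent -[X in _ + X](card_ord k) -[X in _ + X]muln1 -sum_nat_const -big_split.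
by apply: eq_bigr => i _ /=; lia.
Qed.

Lemma pentS k : pent k.+1 = pent k + 3 * k + 1.
Proof. by have := pentpE k; rewrite /pentp /pent big_ord_recr /= => ->; lia. Qed.

Lemma pent0 : pent 0 = 0. Proof. by rewrite /pent big_ord0. Qed.

Lemma pent1 : pent 1 = 1. Proof. by rewrite pentS pent0. Qed.

Lemma leq_pent : {mono pent : a b / a <= b}.
Proof. by apply: leq_mono; apply: homo_ltn ltn_trans _ => k; rewrite pentS; lia. Qed.

Lemma ltn_pent : {mono pent : a b / a < b}.
Proof. exact: leqW_mono leq_pent. Qed.

Lemma pent_inj : injective pent.
Proof. exact: incn_inj leq_pent. Qed.

Lemma pentp_inj : injective pentp.
Proof.
apply: incn_inj; apply: leq_mono; apply: homo_ltn ltn_trans _ => k.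
by rewrite !pentpE pentS; lia.
Qed.

Lemma pentp_lt_pentS k : pentp k < pent k.+1.
Proof. by rewrite pentpE pentS; lia. Qed.

Lemma pred_pentK k : 0 < k -> (pent k).-1.+1 = pent k.
Proof. by move=> k_gt0; rewrite prednK // -pent0 ltn_pent. Qed.

Lemma pred_pentpK k : 0 < k -> (pentp k).-1.+1 = pentp k.
Proof. by move=> k_gt0; rewrite prednK // pentpE; lia. Qed.

Lemma pent_pentp_lt r : pent r.+1 < pentp r.+1 < pent r.+2.
Proof. by rewrite pentp_lt_pentS pentpE andbT; lia. Qed.

Lemma pentagonal_region r m : pent r <= m < pent r.+1 -> pentagonal m ->
  m = pent r \/ m = pentp r.
Proof.
move=> /andP [ge_m lt_m] [k m_k]; suff k_r : k = r by rewrite -k_r.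
apply/eqP; rewrite eqn_leq -ltnS -(ltn_pent k r.+1) -(ltnS r) -(ltn_pent r k.+1).
case: m_k => m_k; subst m.
  by rewrite lt_m (leq_ltn_trans ge_m) // ltn_pent.
rewrite (leq_ltn_trans ge_m (pentp_lt_pentS k)) andbT.
by rewrite (leq_ltn_trans _ lt_m) // pentpE leq_addr.
Qed.

Lemma pent_ge k : k + k <= (pent k).+1.
Proof. by elim: k => [|k IHk]; rewrite ?pentS //; lia. Qed.

Lemma pent_neq_pentp k r : 0 < r -> pent k != pentp r.
Proof.
move=> r_gt0; apply/eqP => eq_kr.
have lo : pent r < pent k.+1.
  by rewrite (@leq_ltn_trans (pent k)) ?ltn_pent // eq_kr pentpE leq_addr.
have hi : pent k < pent r.+1 by rewrite eq_kr pentp_lt_pentS.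
rewrite !ltn_pent !ltnS in lo hi.
by move: eq_kr; rewrite (@anti_leq k r) ?lo ?hi // pentpE; lia.
Qed.

Lemma pent_ge5 k : 1 < k -> 5 <= pent k.
Proof. by move=> k_gt1; rewrite (@leq_trans (pent 2)) ?leq_pent // !pentS pent0. Qed.

Lemma not_pentagonal_gap r a b :
  pent r <= a -> b < pent r.+1 -> (b < pentp r \/ pentp r <= a) ->
  forall m, a < m <= b -> ~ pentagonal m.
Proof.
move=> ge_a lt_b side m /andP [lt_m le_m] pent_m.
have reg : pent r <= m < pent r.+1 by apply/andP; split; lia.
by case: (pentagonal_region reg pent_m) => eq_m; lia.
Qed.

Lemma pent_region n : exists r, pent r <= n < pent r.+1.
Proof.
elim: n => [|n [r /andP [ge_n lt_n]]]; first by exists 0; rewrite pent1 pent0.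
have [lt_nS | ge_nS] := ltnP n.+1 (pent r.+1); first by exists r; rewrite lt_nS; lia.
by exists r.+1; rewrite ge_nS pentS; lia.
Qed.

Section Franklin.

Variable N : nat.
Implicit Types S T : {set 'I_N.+1}.

Definition parts_gt1 S := [forall i in S, 1 < i].
Definition dpart_gt1 n S := parts_gt1 S && (weight S == n).
Definition steep n S := [&& dpart_gt1 n S, S != set0 & has_part S (largest_part S - 1)].

Lemma parts_gt1P S : reflect (forall x, has_part S x -> 1 < x) (parts_gt1 S).
Proof.
apply: (iffP forall_inP) => gt1 x; last by rewrite -has_part_val => /gt1.
by move=> Sx; have := gt1 _ (has_part_inord Sx); rewrite inordK // ltnS (has_part_le Sx).
Qed.
Lemma parts_gt1E S : parts_gt1 S = ~~ has_part S 0 && ~~ has_part S 1.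
Proof.
apply/parts_gt1P/andP => [gt1 | [S0 S1] x Sx].
  by split; apply/negP => /gt1.
by case: x Sx => [|[|x]] Sx //; [rewrite Sx in S0 | rewrite Sx in S1].
Qed.

(* With [m] the largest part, [s] the smallest one and
   [r] the slope, [spread_smallest] removes [s] and adds 1 to each of the [s]
   largest parts [m, m - 1, ..., m - s + 1], while [gather_slope] subtracts 1
   from the [r] largest parts and adds the part [r].  The two staircases on
   which neither move is possible are the fixed points. *)
Definition spread_smallest S :=
  inord (largest_part S).+1
    |: (S :\ inord (smallest_part S) :\ inord (largest_part S - smallest_part S + 1)).

Definition gather_slope S :=
  inord (largest_part S - slope S) |: (inord (slope S) |: (S :\ inord (largest_part S))).

Definition franklin S :=
  if smallest_part S <= slope S then
    if (smallest_part S == slope S) && (smallest_part S == largest_part S - slope S + 1)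
    then S else spread_smallest S
  else if (smallest_part S == (slope S).+1) && (smallest_part S == largest_part S - slope S + 1)
  then S else gather_slope S.

Section SteepPartition.

Variables (n : nat) (S : {set 'I_N.+1}).
Hypothesis steepS : steep n S.

Local Notation m := (largest_part S).
Local Notation s := (smallest_part S).
Local Notation r := (slope S).

Lemma steep_gt1 x : has_part S x -> 1 < x.
Proof. by case/and3P: steepS => /andP [/parts_gt1P gt1 _] _ _; apply: gt1. Qed.

Lemma steep_weight : weight S = n.
Proof. by case/and3P: steepS => /andP [_ /eqP]. Qed.

Lemma steep_has_largest : has_part S m.
Proof. by case/and3P: steepS => _ /has_largest_part. Qed.

Lemma steep_smallest : has_part S s /\ forall x, has_part S x -> s <= x.
Proof.
split; first by case: (smallest_part_min steep_has_largest).
by move=> x /smallest_part_min [].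
Qed.

Lemma steep_slope : [/\ forall i, i < r -> has_part S (m - i), ~~ has_part S (m - r),
  1 < r & r <= m].
Proof.
case/and3P: steepS => _ S_neq0 Sm1.
have S0 : ~~ has_part S 0 by apply/negP => /steep_gt1.
have [gap r_le_m slope_parts] := slope_spec S_neq0 S0.
have m_le := has_part_le steep_has_largest; have m_gt1 := steep_gt1 steep_has_largest.
split=> //; apply: slope_ge; last lia.
by case=> [|[|i]] // _; rewrite subn0 steep_has_largest.
Qed.

Lemma steep_bounds : [/\ 1 < s, s <= m - r + 1, m + s <= n & m <= N].
Proof.
have [Ss le_s] := steep_smallest; have [slope_parts _ r_gt1 r_le_m] := steep_slope.
have Sm := steep_has_largest.
split; first exact: steep_gt1.
- by apply: le_s; rewrite (_ : m - r + 1 = m - (r - 1)); [apply: slope_parts | ]; lia.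
- rewrite -steep_weight leq_parts_weight //.
  by have := le_s _ (slope_parts 1 r_gt1); have := steep_gt1 Sm; lia.
- exact: has_part_le Sm.
Qed.

Lemma steep_staircase : s = m - r + 1 -> S = segment N s r.
Proof.
move=> s_bottom; have [Ss le_s] := steep_smallest; have [slope_parts _ _ _] := steep_slope.
have [s_gt1 _ _ _] := steep_bounds.
apply: eq_set_parts => x; rewrite has_part_segment; apply/idP/idP => [Sx|].
  by have := le_s _ Sx; have := leq_largest_part Sx; have := has_part_le Sx; lia.
case/and3P => xN le_x lt_x; rewrite -(subKn (_ : x <= m)); last lia.
by apply: slope_parts; lia.
Qed.

Hypothesis n_le : n <= N.

Section SpreadSmallest.

Hypothesis s_le_r : s <= r.
Hypothesis not_staircase : ~~ ((s == r) && (s == m - r + 1)).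

Local Notation S' := (spread_smallest S).

Lemma spread_bounds : [/\ 1 < s, s < m - s + 1, r <= m, m.+1 <= N & m + s <= n].
Proof.
have [s_gt1 s_le m_s _] := steep_bounds; have [_ _ r_gt1 r_le_m] := steep_slope.
by split; lia.
Qed.

Lemma has_part_spread x :
  has_part S' x = (x == m.+1) || [&& x != m - s + 1, x != s & has_part S x].
Proof.
have [s_gt1 lt_s r_le_m m_lt m_s] := spread_bounds.
by rewrite has_part_setU1 ?has_part_setD1 //; lia.
Qed.

Lemma spread_parts : [/\ has_part S (m - s + 1), has_part S s & ~~ has_part S m.+1].
Proof.
have [s_gt1 lt_s r_le_m m_lt m_s] := spread_bounds.
have [slope_parts _ _ _] := steep_slope; have [Ss _] := steep_smallest.
split=> //; last by apply/negP => /leq_largest_part; lia.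
by rewrite (_ : m - s + 1 = m - (s - 1)); [apply: slope_parts | ]; lia.
Qed.

Lemma largest_spread : largest_part S' = m.+1.
Proof.
apply: largest_partE; first by rewrite has_part_spread eqxx.
by move=> x; rewrite has_part_spread => /orP [/eqP -> // | /and3P [_ _ /leq_largest_part /leqW]].
Qed.

Lemma slope_spread : slope S' = s.
Proof.
have [s_gt1 lt_s r_le_m m_lt m_s] := spread_bounds.
have [slope_parts _ _ _] := steep_slope.
apply: slopeE; rewrite ?largest_spread.
- move=> [|i] lt_i; rewrite has_part_spread; first by rewrite subn0 eqxx.
  by rewrite subSS slope_parts ?andbT; lia.
- by rewrite has_part_spread; apply/negP => /orP [| /and3P [] ]; lia.
- lia.
Qed.

Lemma smallest_spread : s < smallest_part S'.
Proof.
have [s_gt1 lt_s r_le_m m_lt m_s] := spread_bounds; have [_ le_s] := steep_smallest.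
have [] := smallest_part_min (_ : has_part S' m.+1); first by rewrite has_part_spread eqxx.
rewrite has_part_spread => /orP [/eqP -> _ | /and3P [_ ne_s /le_s]]; lia.
Qed.

Lemma weight_card_spread : weight S' = n /\ #|S| = #|S'|.+1.
Proof.
have [s_gt1 lt_s r_le_m m_lt m_s] := spread_bounds; have [Sa Ss Sm1] := spread_parts.
have Sa' : has_part (S :\ inord s) (m - s + 1) by rewrite has_part_setD1 ?Sa; lia.
have Sm1' : ~~ has_part (S :\ inord s :\ inord (m - s + 1)) m.+1.
  by rewrite !has_part_setD1 ?(negbTE Sm1) ?andbF //; lia.
rewrite weight_setU1 // card_setU1_part //.
rewrite -steep_weight (weight_setD1 Ss) (weight_setD1 Sa').
by rewrite (card_setD1_part Ss) (card_setD1_part Sa'); split=> //; lia.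
Qed.

Lemma steep_spread : steep n S'.
Proof.
have [s_gt1 lt_s r_le_m m_lt m_s] := spread_bounds.
apply/and3P; split.
- rewrite /dpart_gt1 (proj1 weight_card_spread) eqxx andbT; apply/parts_gt1P => x.
  by rewrite has_part_spread => /orP [/eqP -> | /and3P [_ _ /steep_gt1]] //; lia.
- by apply: (@has_part_neq0 _ _ m.+1); rewrite has_part_spread eqxx.
- by rewrite largest_spread subSS subn0 has_part_spread steep_has_largest andbT; lia.
Qed.

Lemma gather_spread : gather_slope S' = S.
Proof.
have [s_gt1 lt_s r_le_m m_lt m_s] := spread_bounds; have [Sa Ss Sm1] := spread_parts.
rewrite /gather_slope largest_spread slope_spread.
apply: eq_set_parts => x; rewrite !has_part_setU1 ?has_part_setD1 ?has_part_spread; try lia.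
have -> : m.+1 - s = m - s + 1 by lia.
case: (eqVneq x (m - s + 1)) => [-> // | ne_a]; case: (eqVneq x s) => [-> // | ne_s].
by case: (eqVneq x m.+1) => [-> | //]; rewrite (negbTE Sm1).
Qed.

Lemma franklin_spread : franklin S' = S.
Proof.
have [s_gt1 lt_s r_le_m m_lt m_s] := spread_bounds.
rewrite /franklin slope_spread largest_spread leqNgt smallest_spread /=.
by rewrite ifN ?gather_spread //; have := smallest_spread; lia.
Qed.

End SpreadSmallest.

Section GatherSlope.

Hypothesis r_lt_s : r < s.
Hypothesis not_staircase : ~~ ((s == r.+1) && (s == m - r + 1)).

Local Notation S' := (gather_slope S).

Lemma gather_bounds : [/\ 1 < r, r < m - r, m <= N & ~~ has_part S r].
Proof.
have [s_gt1 s_le m_s m_le] := steep_bounds; have [_ gap r_gt1 r_le_m] := steep_slope.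
have [Ss le_s] := steep_smallest.
have ne_s : s != m - r by apply: contraNneq gap => <-.
split=> //; first lia.
by apply/negP => /le_s; lia.
Qed.

Lemma has_part_gather x :
  has_part S' x = [|| x == m - r, x == r | (x != m) && has_part S x].
Proof.
by have [r_gt1 lt_r m_le _] := gather_bounds; rewrite !has_part_setU1 ?has_part_setD1 //; lia.
Qed.

Lemma gather_top i : i < r -> has_part S' (m - 1 - i).
Proof.
have [r_gt1 lt_r m_le _] := gather_bounds; have [slope_parts _ _ _] := steep_slope.
move=> lt_i; rewrite has_part_gather; case: (eqVneq i r.-1) => [-> | ne_i].
  by apply/orP; left; apply/eqP; lia.
by rewrite (_ : m - 1 - i = m - i.+1) ?slope_parts ?andbT; lia.
Qed.

Lemma largest_gather : largest_part S' = m - 1.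
Proof.
have [r_gt1 lt_r m_le _] := gather_bounds.
apply: largest_partE => [|x]; first by rewrite -(subn0 (m - 1)) gather_top; lia.
rewrite has_part_gather => /or3P [/eqP -> | /eqP -> | /andP [ne_m /leq_largest_part]]; lia.
Qed.

Lemma smallest_gather : smallest_part S' = r.
Proof.
have [r_gt1 lt_r m_le _] := gather_bounds; have [_ le_s] := steep_smallest.
apply: smallest_partE => [|x]; first by rewrite has_part_gather eqxx orbT.
by rewrite has_part_gather => /or3P [/eqP -> | /eqP -> | /andP [_ /le_s]]; lia.
Qed.

Lemma weight_card_gather : weight S' = n /\ #|S'| = #|S|.+1.
Proof.
have [r_gt1 lt_r m_le Sr] := gather_bounds; have [_ gap _ _] := steep_slope.
have Sm := steep_has_largest.
have Sr' : ~~ has_part (S :\ inord m) r by rewrite has_part_setD1 ?(negbTE Sr) ?andbF.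
have Sa' : ~~ has_part (inord r |: (S :\ inord m)) (m - r).
  by rewrite has_part_setU1 ?has_part_setD1 ?(negbTE gap) ?andbF ?orbF; lia.
rewrite !weight_setU1 ?card_setU1_part //; try lia.
by rewrite -steep_weight (weight_setD1 Sm) (card_setD1_part Sm); split=> //; lia.
Qed.

Lemma steep_gather : steep n S'.
Proof.
have [r_gt1 lt_r m_le _] := gather_bounds.
apply/and3P; split.
- rewrite /dpart_gt1 (proj1 weight_card_gather) eqxx andbT; apply/parts_gt1P => x.
  by rewrite has_part_gather => /or3P [/eqP -> | /eqP -> | /andP [_ /steep_gt1]] //; lia.
- by apply: (@has_part_neq0 _ _ r); rewrite has_part_gather eqxx orbT.
- by rewrite largest_gather gather_top.
Qed.

Lemma spread_gather : spread_smallest S' = S.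
Proof.
have [r_gt1 lt_r m_le Sr] := gather_bounds; have [_ gap _ _] := steep_slope.
have Sm := steep_has_largest.
rewrite /spread_smallest largest_gather smallest_gather.
apply: eq_set_parts => x; rewrite has_part_setU1 ?has_part_setD1 ?has_part_gather; try lia.
have -> : (m - 1).+1 = m by lia.
have -> : m - 1 - r + 1 = m - r by lia.
case: (eqVneq x m) => [-> // | ne_m]; case: (eqVneq x (m - r)) => [-> | ne_a].
  by rewrite (negbTE gap) andbF.
by case: (eqVneq x r) => [-> | //]; rewrite (negbTE Sr) andbF.
Qed.

Lemma franklin_gather : franklin S' = S.
Proof.
have [r_gt1 lt_r m_le _] := gather_bounds.
have r_le : r <= slope S'.
  apply: slope_ge; last lia.
  by rewrite largest_gather => i /gather_top.
rewrite /franklin smallest_gather largest_gather r_le ifN ?spread_gather //.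
by apply/negP => /andP [/eqP r_eq /eqP]; rewrite -r_eq; lia.
Qed.

End GatherSlope.

Lemma franklin_spec : franklin S = S \/
  [/\ steep n (franklin S), franklin (franklin S) = S,
      odd (largest_part (franklin S)) = ~~ odd m & odd #|franklin S| = ~~ odd #|S|].
Proof.
have m_gt1 := steep_gt1 steep_has_largest.
case: (leqP s r) => [s_le_r | r_lt_s].
  case: (boolP ((s == r) && (s == m - r + 1))) => [stair | not_stair].
    by left; rewrite /franklin s_le_r stair.
  have -> : franklin S = spread_smallest S by rewrite /franklin s_le_r (negbTE not_stair).
  right; rewrite franklin_spread // largest_spread //= (proj2 (weight_card_spread _ _)) //=.
  by rewrite negbK; split=> //; apply: steep_spread.
case: (boolP ((s == r.+1) && (s == m - r + 1))) => [stair | not_stair].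
  by left; rewrite /franklin leqNgt r_lt_s stair.
have -> : franklin S = gather_slope S.
  by rewrite /franklin leqNgt r_lt_s (negbTE not_stair).
right; rewrite franklin_gather // largest_gather // (proj2 (weight_card_gather _ _)) //=.
by rewrite oddB ?addbT; [split=> //; apply: steep_gather | lia].
Qed.

Lemma franklin_fixed : franklin S = S ->
  (S = segment N r r /\ n = pent r) \/ (S = segment N r.+1 r /\ n = pentp r).
Proof.
move=> fixed; have [s_gt1 s_le m_s m_le] := steep_bounds.
have weight_seg a k : a + k <= N.+1 -> S = segment N a k -> n = \sum_(i < k) (a + i).
  by move=> akN eqS; rewrite -steep_weight eqS; have [-> _] := weight_card_segment akN.
case: (leqP s r) => [s_le_r | r_lt_s].
  case: (boolP ((s == r) && (s == m - r + 1))) => [/andP [/eqP s_r /eqP s_b] | not_stair].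
    have eqS : S = segment N r r by rewrite -[in segment N r]s_r; apply: steep_staircase.
    by left; split=> //; apply: weight_seg eqS; lia.
  have fS : franklin S = spread_smallest S by rewrite /franklin s_le_r (negbTE not_stair).
  by have := largest_spread s_le_r not_stair; rewrite -fS fixed; lia.
case: (boolP ((s == r.+1) && (s == m - r + 1))) => [/andP [/eqP s_r /eqP s_b] | not_stair].
  have eqS : S = segment N r.+1 r by rewrite -s_r; apply: steep_staircase.
  by right; split=> //; apply: weight_seg eqS; lia.
have fS : franklin S = gather_slope S.
  by rewrite /franklin leqNgt r_lt_s (negbTE not_stair).
have := steep_gt1 steep_has_largest.
by have := largest_gather r_lt_s not_stair; rewrite -fS fixed; lia.
Qed.

End SteepPartition.
End Franklin.

Section SteepSums.

Variable N : nat.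
Implicit Types S : {set 'I_N.+1}.

Lemma segment_spec a k : 1 < a -> 1 < k -> a <= k.+1 -> a + k <= N.+1 ->
  let S := segment N a k in
  [/\ steep (weight S) S, largest_part S = a + k - 1, smallest_part S = a,
      slope S = k & #|S| = k].
Proof.
move=> a_gt1 k_gt1 a_le akN S.
have largestS : largest_part S = a + k - 1.
  by apply: largest_partE => [|x]; rewrite has_part_segment; lia.
have smallestS : smallest_part S = a.
  by apply: smallest_partE => [|x]; rewrite has_part_segment; lia.
have slopeS : slope S = k.
  apply: slopeE; rewrite ?largestS; last lia.
    by move=> i lt_i; rewrite has_part_segment; lia.
  by rewrite has_part_segment; lia.
split=> //; last by case: (weight_card_segment akN).
apply/and3P; split; last by rewrite largestS has_part_segment; lia.
- by rewrite /dpart_gt1 eqxx andbT; apply/parts_gt1P => x; rewrite has_part_segment; lia.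
- by apply: (@has_part_neq0 _ _ a); rewrite has_part_segment; lia.
Qed.

Lemma staircase_fixed k : 1 < k -> pent k <= N ->
  let S := segment N k k in
  [/\ steep (pent k) S, franklin S = S, largest_part S = k + k - 1 & #|S| = k].
Proof.
move=> k_gt1 kN S; have kkN : k + k <= N.+1 by have := pent_ge k; lia.
have [steepS largestS smallestS slopeS cardS] := segment_spec k_gt1 k_gt1 (leqnSn k) kkN.
have [weightS _] := weight_card_segment kkN.
split=> //; first by rewrite weightS in steepS.
by rewrite /franklin smallestS slopeS largestS leqnn (_ : k + k - 1 - k + 1 = k) ?eqxx //; lia.
Qed.

Lemma staircase_succ_fixed k : 1 < k -> pentp k <= N ->
  let S := segment N k.+1 k in
  [/\ steep (pentp k) S, franklin S = S, largest_part S = k + k & #|S| = k].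
Proof.
move=> k_gt1 kN S; have kkN : k.+1 + k <= N.+1 by have := pent_ge k; rewrite pentpE in kN; lia.
have [steepS largestS smallestS slopeS cardS] := segment_spec (leqW k_gt1) k_gt1 (leqnn _) kkN.
have [weightS _] := weight_card_segment kkN.
split=> //; [by rewrite weightS in steepS | | by rewrite largestS; lia].
rewrite /franklin smallestS slopeS largestS ltnn.
by rewrite (_ : k.+1 + k - 1 - k + 1 = k.+1) ?eqxx //; lia.
Qed.

Definition steep_alt_largest n : int :=
  (\sum_(S : {set 'I_N.+1} | steep n S) (-1) ^+ largest_part S)%R.
Definition steep_alt_length n : int := (\sum_(S : {set 'I_N.+1} | steep n S) (-1) ^+ #|S|)%R.

Lemma sum_steep_franklin_fixed n (e : {set 'I_N.+1} -> nat) : n <= N ->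
  (forall S, steep n S -> franklin S != S -> odd (e (franklin S)) = ~~ odd (e S)) ->
  (\sum_(S : {set 'I_N.+1} | steep n S) (-1) ^+ e S =
     \sum_(S | steep n S && (franklin S == S)) (-1) ^+ e S :> int)%R.
Proof.
move=> nN odd_e; apply: sum_sign_reversing_involution => S steepS.
- by case: (franklin_spec steepS nN) => [-> // | []].
- by case: (franklin_spec steepS nN) => [fixedS | [_ ->]]; rewrite ?fixedS.
- by move=> moved; rewrite -signr_odd odd_e // signrN signr_odd.
Qed.

Lemma steep_fixed_pent k : 1 < k -> pent k <= N ->
  forall S, (steep (pent k) S && (franklin S == S)) = (S == segment N k k).
Proof.
move=> k_gt1 kN S; apply/andP/eqP => [[steepS /eqP fixedS] | ->].
  case: (franklin_fixed steepS kN fixedS) => [[eqS /pent_inj ->] // | [_ eq_k]].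
  have [_ _ r_gt1 _] := steep_slope steepS.
  by move: (pent_neq_pentp k (ltnW r_gt1)); rewrite eq_k eqxx.
by have [steepS fixedS _ _] := staircase_fixed k_gt1 kN; rewrite fixedS.
Qed.

Lemma steep_fixed_pentp k : 1 < k -> pentp k <= N ->
  forall S, (steep (pentp k) S && (franklin S == S)) = (S == segment N k.+1 k).
Proof.
move=> k_gt1 kN S; apply/andP/eqP => [[steepS /eqP fixedS] | ->].
  case: (franklin_fixed steepS kN fixedS) => [[_ eq_k] | [eqS /pentp_inj ->] //].
  by move: (pent_neq_pentp (slope S) (ltnW k_gt1)); rewrite eq_k eqxx.
by have [steepS fixedS _ _] := staircase_succ_fixed k_gt1 kN; rewrite fixedS.
Qed.

Lemma steep_fixed_gap n : n <= N -> (forall k, 1 < k -> n != pent k /\ n != pentp k) ->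
  forall S, (steep n S && (franklin S == S)) = false.
Proof.
move=> nN not_pent S; apply/andP => [[steepS /eqP fixedS]].
have [_ _ r_gt1 _] := steep_slope steepS; have [ne_pent ne_pentp] := not_pent _ r_gt1.
by case: (franklin_fixed steepS nN fixedS) => [[_ /eqP] | [_ /eqP]]; apply/negP.
Qed.

Lemma steep_sums_fixed n : n <= N ->
  steep_alt_largest n =
    (\sum_(S : {set 'I_N.+1} | steep n S && (franklin S == S)) (-1) ^+ largest_part S)%R /\
  steep_alt_length n = (\sum_(S : {set 'I_N.+1} | steep n S && (franklin S == S)) (-1) ^+ #|S|)%R.
Proof.
move=> nN; split; apply: sum_steep_franklin_fixed => // S steepS.
  by case: (franklin_spec steepS nN) => [-> | [_ _ -> _]]; rewrite ?eqxx.
by case: (franklin_spec steepS nN) => [-> | [_ _ _ ->]]; rewrite ?eqxx.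
Qed.

Lemma steep_sums_pent k : 1 < k -> pent k <= N ->
  steep_alt_largest (pent k) = (-1)%R /\ steep_alt_length (pent k) = ((-1) ^+ k)%R.
Proof.
move=> k_gt1 kN; have [_ _ largestS cardS] := staircase_fixed k_gt1 kN.
have fixedE := steep_fixed_pent k_gt1 kN.
have [-> ->] := steep_sums_fixed kN; rewrite !(big_pred1 _ fixedE) largestS cardS.
by rewrite -signr_odd oddB ?oddD ?addbb //; lia.
Qed.

Lemma steep_sums_pentp k : 1 < k -> pentp k <= N ->
  steep_alt_largest (pentp k) = 1%R /\ steep_alt_length (pentp k) = ((-1) ^+ k)%R.
Proof.
move=> k_gt1 kN; have [_ _ largestS cardS] := staircase_succ_fixed k_gt1 kN.
have fixedE := steep_fixed_pentp k_gt1 kN.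
have [-> ->] := steep_sums_fixed kN; rewrite !(big_pred1 _ fixedE) largestS cardS.
by rewrite -signr_odd oddD addbb.
Qed.

Lemma steep_sums_gap n : n <= N -> (forall k, 1 < k -> n != pent k /\ n != pentp k) ->
  steep_alt_largest n = 0%R /\ steep_alt_length n = 0%R.
Proof.
move=> nN not_pent; have fixedE := steep_fixed_gap nN not_pent.
by have [-> ->] := steep_sums_fixed nN; rewrite !big_pred0.
Qed.

Lemma steep_sums_small n : n < 5 -> n <= N ->
  steep_alt_largest n = 0%R /\ steep_alt_length n = 0%R.
Proof.
move=> n_lt5 nN; apply: steep_sums_gap => // k /pent_ge5 ge5.
by rewrite pentpE; split; apply/eqP; lia.
Qed.

End SteepSums.

Section AlternatingSums.

Variable N : nat.
Implicit Types S T : {set 'I_N.+1}.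

Lemma has_part_set1 a x : a <= N -> has_part [set inord a : 'I_N.+1] x = (x == a).
Proof. by move=> aN; rewrite -[[set _]]setU0 has_part_setU1 // has_part_set0 orbF. Qed.

Definition top_gap n S :=
  [&& dpart_gt1 n S, S != set0, ~~ has_part S (largest_part S - 1) & 2 < largest_part S].

Definition raise_largest T := inord (largest_part T).+1 |: (T :\ inord (largest_part T)).
Definition lower_largest S := inord (largest_part S - 1) |: (S :\ inord (largest_part S)).

Section RaiseLargest.

Variables (n : nat) (T : {set 'I_N.+1}).
Hypotheses (n_lt : n < N) (dpartT : dpart_gt1 n T) (T_neq0 : T != set0).

Local Notation m := (largest_part T).

Lemma raise_bounds : [/\ has_part T m, 1 < m, m < N & ~~ has_part T m.+1].
Proof.
have Tm := has_largest_part T_neq0; case/andP: dpartT => /parts_gt1P gt1 /eqP weightT.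
have m_le : m <= n by rewrite -weightT leq_part_weight.
split=> //; [exact: gt1 | lia | by apply/negP => /leq_largest_part; lia].
Qed.

Lemma has_part_raise x :
  has_part (raise_largest T) x = (x == m.+1) || (x != m) && has_part T x.
Proof. by have [_ _ m_lt _] := raise_bounds; rewrite has_part_setU1 ?has_part_setD1 //; lia. Qed.

Lemma largest_raise : largest_part (raise_largest T) = m.+1.
Proof.
apply: largest_partE => [|x]; first by rewrite has_part_raise eqxx.
by rewrite has_part_raise => /orP [/eqP -> // | /andP [_ /leq_largest_part]]; lia.
Qed.

Lemma card_weight_raise : #|raise_largest T| = #|T| /\ weight (raise_largest T) = n.+1.
Proof.
have [Tm m_gt1 m_lt Tm1] := raise_bounds; case/andP: dpartT => _ /eqP weightT.
have m_le := ltnW m_lt.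
have Tm1' : ~~ has_part (T :\ inord m) m.+1 by rewrite has_part_setD1 ?(negbTE Tm1) ?andbF.
rewrite /raise_largest card_setU1_part ?weight_setU1 // -weightT.
rewrite (card_setD1_part Tm) (weight_setD1 Tm).
by split=> //; lia.
Qed.

Lemma top_gap_raise : top_gap n.+1 (raise_largest T).
Proof.
have [Tm m_gt1 m_lt Tm1] := raise_bounds; case/andP: dpartT => /parts_gt1P gt1 _.
apply/and4P; split.
- rewrite /dpart_gt1 (proj2 card_weight_raise) eqxx andbT; apply/parts_gt1P => x.
  by rewrite has_part_raise => /orP [/eqP -> | /andP [_ /gt1]] //; lia.
- by apply: (@has_part_neq0 _ _ m.+1); rewrite has_part_raise eqxx.
- by rewrite largest_raise has_part_raise subn1 /= eqxx /= orbF; lia.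
- by rewrite largest_raise; lia.
Qed.

Lemma lower_raise : lower_largest (raise_largest T) = T.
Proof.
have [Tm m_gt1 m_lt Tm1] := raise_bounds.
rewrite /lower_largest largest_raise subn1 /=; apply: eq_set_parts => x.
rewrite has_part_setU1 ?has_part_setD1 ?has_part_raise //; last lia.
case: (eqVneq x m) => [-> // | ne_m]; case: (eqVneq x m.+1) => [-> | //].
by rewrite (negbTE Tm1).
Qed.

End RaiseLargest.

Section LowerLargest.

Variables (n : nat) (S : {set 'I_N.+1}).
Hypotheses (n_lt : n < N) (topS : top_gap n.+1 S).

Local Notation m := (largest_part S).

Lemma lower_bounds : [/\ has_part S m, 2 < m, m <= N & ~~ has_part S (m - 1)].
Proof.
case/and4P: topS => _ S_neq0 Sm1 m_gt2; have Sm := has_largest_part S_neq0.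
by split=> //; apply: has_part_le Sm.
Qed.

Lemma has_part_lower x :
  has_part (lower_largest S) x = (x == m - 1) || (x != m) && has_part S x.
Proof.
by have [_ m_gt2 m_le _] := lower_bounds; rewrite has_part_setU1 ?has_part_setD1 //; lia.
Qed.

Lemma largest_lower : largest_part (lower_largest S) = m - 1.
Proof.
apply: largest_partE => [|x]; first by rewrite has_part_lower eqxx.
by rewrite has_part_lower => /orP [/eqP -> // | /andP [ne_m /leq_largest_part]]; lia.
Qed.

Lemma dpart_lower : dpart_gt1 n (lower_largest S) && (lower_largest S != set0).
Proof.
have [Sm m_gt2 m_le Sm1] := lower_bounds; case/and4P: topS => /andP [/parts_gt1P gt1 /eqP].
rewrite (weight_setD1 Sm) => weightS _ _ _; rewrite /dpart_gt1 -andbA; apply/and3P; split.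
- apply/parts_gt1P => x; rewrite has_part_lower.
  by case/orP => [/eqP -> | /andP [_ /gt1]] //; lia.
- have Sm1' : ~~ has_part (S :\ inord m) (m - 1) by rewrite has_part_setD1 ?(negbTE Sm1) ?andbF.
  by rewrite weight_setU1 //; lia.
- by apply: (@has_part_neq0 _ _ (m - 1)); rewrite has_part_lower eqxx.
Qed.

Lemma raise_lower : raise_largest (lower_largest S) = S.
Proof.
have [Sm m_gt2 m_le Sm1] := lower_bounds.
rewrite /raise_largest largest_lower (_ : (m - 1).+1 = m); last lia.
apply: eq_set_parts => x; rewrite has_part_setU1 ?has_part_setD1 ?has_part_lower //; last lia.
case: (eqVneq x m) => [-> // | ne_m]; case: (eqVneq x (m - 1)) => [-> | //].
by rewrite (negbTE Sm1).
Qed.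

End LowerLargest.

Lemma sum_top_gap n (F : {set 'I_N.+1} -> int) : n < N ->
  (\sum_(S | top_gap n.+1 S) F S =
     \sum_(T | dpart_gt1 n T && (T != set0)) F (raise_largest T))%R.
Proof.
move=> n_lt; apply: (@reindex_bij_on _ _ _ _ _ _ _ lower_largest) => [T | S | T | S].
- by case/andP => dpartT T_neq0; apply: top_gap_raise.
- exact: dpart_lower.
- by case/andP => dpartT T_neq0; apply: (lower_raise n_lt dpartT).
- exact: (raise_lower n_lt).
Qed.

Lemma small_top_gap n S : n <= N ->
  [&& dpart_gt1 n S, S != set0, ~~ has_part S (largest_part S - 1) & largest_part S <= 2]
  = (n == 2) && (S == [set inord 2]).
Proof.
move=> nN; apply/and4P/andP => [[/andP [/parts_gt1P gt1 /eqP weightS] S_neq0 _ m_le2] | []].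
  have Sm := has_largest_part S_neq0; have m2 : largest_part S = 2 by have := gt1 _ Sm; lia.
  have N2 : 2 <= N by rewrite -m2 (has_part_le Sm).
  have eqS : S = [set inord 2].
    apply: eq_set_parts => x; rewrite has_part_set1 //; apply/idP/eqP => [Sx | ->].
      by have := gt1 _ Sx; have := leq_largest_part Sx; lia.
    by rewrite -m2.
  by rewrite -weightS eqS /weight big_set1 inordK.
move=> /eqP n2 /eqP ->; have N2 : 2 <= N by rewrite -n2.
rewrite /dpart_gt1 /largest_part /weight !big_set1 inordK // has_part_set1 // n2.
split=> //; last by apply: (@has_part_neq0 _ _ 2); rewrite has_part_set1.
by apply/andP; split=> //; apply/parts_gt1P => x; rewrite has_part_set1 // => /eqP ->.
Qed.

Lemma sum_dpart_gt1_split n (F : {set 'I_N.+1} -> int) : n <= N ->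
  (\sum_(S | dpart_gt1 n S && (S != set0)) F S =
   \sum_(S | steep n S) F S + \sum_(S | top_gap n S) F S
     + if n == 2%N then F [set inord 2] else 0)%R.
Proof.
move=> nN; rewrite (bigID (fun S => has_part S (largest_part S - 1))) /=.
rewrite (bigID (fun S => 2 < largest_part S) (fun S => _ && ~~ _)) /= addrA.
congr (_ + _ + _)%R; first by apply: eq_bigl => S; rewrite /steep andbA.
  by apply: eq_bigl => S; rewrite /top_gap !andbA.
have smallE S : dpart_gt1 n S && (S != set0) && ~~ has_part S (largest_part S - 1)
    && ~~ (2 < largest_part S) = (n == 2) && (S == [set inord 2]).
  by rewrite -leqNgt -2!andbA small_top_gap.
case: (eqVneq n 2) => [n2 | n_neq2].
  by apply: big_pred1 => S; rewrite smallE n2.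
by apply: big_pred0 => S; rewrite smallE (negbTE n_neq2).
Qed.

Definition alt_largest n : int :=
  (\sum_(S : {set 'I_N.+1} | dpart_gt1 n S && (S != set0)) (-1) ^+ largest_part S)%R.
Definition alt_length n : int := (\sum_(S : {set 'I_N.+1} | dpart_gt1 n S) (-1) ^+ #|S|)%R.

Lemma dpart_gt1_nonempty n S : dpart_gt1 n S -> S != set0 -> 1 < n.
Proof.
case/andP => /parts_gt1P gt1 /eqP <- /has_largest_part Sm.
exact: leq_trans (gt1 _ Sm) (leq_part_weight Sm).
Qed.

Lemma alt_length_nonempty n : alt_length n =
  ((n == 0)%N%:R + \sum_(S : {set 'I_N.+1} | dpart_gt1 n S && (S != set0)) (-1) ^+ #|S|)%R.
Proof.
have set0E S : (dpart_gt1 n S && (S == set0)) = (n == 0) && (S == set0).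
  case: (eqVneq S set0) => [-> | _]; rewrite ?andbF // !andbT.
  have gt1_0 : parts_gt1 (set0 : {set 'I_N.+1}) by apply/parts_gt1P => x; rewrite has_part_set0.
  by rewrite /dpart_gt1 gt1_0 weight_set0 eq_sym.
rewrite /alt_length (bigID (fun S => S == set0)) /= (eq_bigl _ _ set0E); congr (_ + _)%R.
case: eqP => _; last by rewrite big_pred0.
by rewrite (big_pred1 set0) ?cards0.
Qed.

Lemma alt_length0 : alt_length 0 = 1%R.
Proof.
rewrite alt_length_nonempty big_pred0 ?addr0 // => S.
by apply/negP => /andP [dS /(dpart_gt1_nonempty dS)].
Qed.

Lemma alt_largest_lt2 n : n < 2 -> alt_largest n = 0%R.
Proof.
move=> n_lt2; apply: big_pred0 => S; apply/negP => /andP [dS /(dpart_gt1_nonempty dS)].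
by rewrite ltnNge -ltnS n_lt2.
Qed.

Lemma alt_largest_rec n : n < N ->
  alt_largest n.+1 = (steep_alt_largest N n.+1 - alt_largest n + (n.+1 == 2)%N%:R)%R.
Proof.
move=> n_lt; rewrite /alt_largest sum_dpart_gt1_split // sum_top_gap // -sumrN.
congr (_ + _ + _)%R.
  by apply: eq_bigr => T /andP [dT T_neq0]; rewrite (largest_raise n_lt dT) // exprS mulN1r.
by case: eqP => [n2 | _] //; rewrite /largest_part big_set1 inordK // -n2.
Qed.

Lemma alt_length_rec n : n < N ->
  alt_length n.+1 =
    (steep_alt_length N n.+1 + alt_length n - (n == 0)%N%:R - (n.+1 == 2)%N%:R)%R.
Proof.
move=> n_lt; rewrite alt_length_nonempty sum_dpart_gt1_split // sum_top_gap //.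
rewrite (alt_length_nonempty n) -/(steep_alt_length N n.+1) /=.
rewrite (eq_bigr (fun T => (-1) ^+ #|T|)%R) => [|T /andP [dT T_neq0]]; last first.
  by rewrite (proj1 (card_weight_raise n_lt dT T_neq0)).
case: eqP => [n2 | _] /=; last by ring.
by rewrite cards1 expr1; ring.
Qed.

End AlternatingSums.

Section ClosedForms.

Variable N : nat.

Local Notation A := (alt_largest N).
Local Notation D := (alt_length N).

Lemma alt_step_gap n : n < N -> ~ pentagonal n.+1 -> D n.+1 = D n /\ A n.+1 = (- A n)%R.
Proof.
move=> n_lt not_pent.
have n_neq0 : (n == 0) = false.
  by apply/negbTE/eqP => n0; apply: not_pent; exists 1; left; rewrite n0 pent1.
have n_neq1 : (n.+1 == 2) = false.
  by apply/negbTE/eqP => [[n1]]; apply: not_pent; exists 1; right; rewrite n1 pentpE pent1.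
have [SA SD] : steep_alt_largest N n.+1 = 0%R /\ steep_alt_length N n.+1 = 0%R.
  apply: steep_sums_gap => // k _.
  by split; apply/eqP => eq_n; apply: not_pent; exists k; [left | right].
by rewrite alt_length_rec // alt_largest_rec // n_neq0 n_neq1 SA SD /=; split; ring.
Qed.

Lemma alt_length_pent k : 0 < k -> pent k <= N -> D (pent k) = (D (pent k).-1 + (-1) ^+ k)%R.
Proof.
move=> k_gt0 kN; have pentK := pred_pentK k_gt0.
rewrite -{1}pentK alt_length_rec pentK; last lia.
have [k1 | k_gt1] : k = 1 \/ 1 < k by lia.
  by subst k; rewrite pent1 in kN *; rewrite (proj2 (steep_sums_small _ kN)) //=; ring.
have ge5 := pent_ge5 k_gt1.
have -> : ((pent k).-1 == 0) = false by apply/negbTE; lia.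
have -> : (pent k == 2) = false by apply/negbTE; lia.
by rewrite (proj2 (steep_sums_pent k_gt1 kN)) /=; ring.
Qed.

Lemma alt_length_pentp k : 0 < k -> pentp k <= N ->
  D (pentp k) = (D (pentp k).-1 + (-1) ^+ k)%R.
Proof.
move=> k_gt0 kN; have pentK := pred_pentpK k_gt0.
rewrite -{1}pentK alt_length_rec pentK; last lia.
have [k1 | k_gt1] : k = 1 \/ 1 < k by lia.
  by subst k; rewrite pentpE pent1 in kN *; rewrite (proj2 (steep_sums_small _ kN)) //=; ring.
have ge5 := pent_ge5 k_gt1.
have -> : ((pentp k).-1 == 0) = false by apply/negbTE; rewrite pentpE; lia.
have -> : (pentp k == 2) = false by apply/negbTE; rewrite pentpE; lia.
by rewrite (proj2 (steep_sums_pentp k_gt1 kN)) /=; ring.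
Qed.

Lemma alt_largest_pent k : 1 < k -> pent k <= N -> A (pent k) = (- A (pent k).-1 - 1)%R.
Proof.
move=> k_gt1 kN; have pentK := pred_pentK (ltnW k_gt1); have ge5 := pent_ge5 k_gt1.
rewrite -{1}pentK alt_largest_rec pentK; last lia.
have -> : (pent k == 2) = false by apply/negbTE; lia.
by rewrite (proj1 (steep_sums_pent k_gt1 kN)) /=; ring.
Qed.

Lemma alt_largest_pentp k : 0 < k -> pentp k <= N -> A (pentp k) = (1 - A (pentp k).-1)%R.
Proof.
move=> k_gt0 kN; have pentK := pred_pentpK k_gt0.
rewrite -{1}pentK alt_largest_rec pentK; last lia.
have [k1 | k_gt1] : k = 1 \/ 1 < k by lia.
  by subst k; rewrite pentpE pent1 in kN *; rewrite (proj1 (steep_sums_small _ kN)) //=; ring.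
have -> : (pentp k == 2) = false by apply/negbTE; have := pent_ge5 k_gt1; rewrite pentpE; lia.
by rewrite (proj1 (steep_sums_pentp k_gt1 kN)) /=; ring.
Qed.

Lemma alt_gap a b : a <= b <= N -> (forall m, a < m <= b -> ~ pentagonal m) ->
  D b = D a /\ A b = ((-1) ^+ (b - a) * A a)%R.
Proof.
elim: b => [|b IHb] /andP [le_ab bN] gap.
  by rewrite (_ : a = 0) ?subnn ?mul1r //; lia.
have [-> | lt_ab] := eqVneq a b.+1; first by rewrite subnn mul1r.
have [IHD IHA] : D b = D a /\ A b = ((-1) ^+ (b - a) * A a)%R.
  apply: IHb => [|m /andP [lt_m le_m]]; first lia.
  by apply: gap; lia.
have gap_b : ~ pentagonal b.+1 by apply: gap; lia.
have [-> ->] := alt_step_gap bN gap_b.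
by rewrite IHD IHA subSn ?exprS ?mulN1r ?mulNr //; lia.
Qed.

Lemma alt_length_closed r n : n <= N -> pent r <= n < pent r.+1 ->
  D n = if n < pentp r then 0%R else ((-1) ^+ r)%R.
Proof.
elim: r n => [|r IHr] n nN /andP [ge_n lt_n].
  have -> : n = 0 by move: lt_n; rewrite pent1; lia.
  by rewrite pentpE pent0 alt_length0.
have /andP [lt_ppS lt_pS] := pent_pentp_lt r; have ltS := pentS r; have lt_pp := pentp_lt_pentS r.
have D_pent : D (pent r.+1) = 0%R.
  have prev : pent r <= (pent r.+1).-1 < pent r.+1 by apply/andP; split; lia.
  rewrite alt_length_pent // ?(IHr _ _ prev); try lia.
  by rewrite ifN -?leqNgt 1?exprS ?mulN1r ?addrN //; lia.
have [lt_p | ge_p] := ltnP n (pentp r.+1).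
  have reg : pent r.+1 <= n <= N by lia.
  by have [-> _] := alt_gap reg (not_pentagonal_gap (leqnn _) lt_n (or_introl lt_p)).
have D_pentp : D (pentp r.+1) = ((-1) ^+ r.+1)%R.
  rewrite alt_length_pentp //; last lia.
  have reg : pent r.+1 <= (pentp r.+1).-1 <= N by lia.
  have lt_p : (pentp r.+1).-1 < pentp r.+1 by lia.
  have [-> _] := alt_gap reg (not_pentagonal_gap (leqnn _) (ltn_trans lt_p lt_pS) (or_introl lt_p)).
  by rewrite D_pent add0r.
have reg : pentp r.+1 <= n <= N by lia.
by have [-> _] := alt_gap reg (not_pentagonal_gap (ltnW lt_ppS) lt_n (or_intror (leqnn _))).
Qed.

Lemma alt_largest_closed r n : 0 < r -> n <= N -> pent r <= n < pent r.+1 ->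
  A n = (if (n < pentp r)%N then (-1) ^+ (n - pent r) * (-1 - (-1) ^+ r)
         else - (-1) ^+ (n - pentp r + r))%R.
Proof.
elim: r n => [//|r IHr] n _ nN /andP [ge_n lt_n].
have /andP [lt_ppS lt_pS] := pent_pentp_lt r; have ppE := pentpE r.+1.
have A_pent : A (pent r.+1) = (-1 - (-1) ^+ r.+1)%R.
  case: r IHr ge_n {lt_n lt_ppS lt_pS ppE} => [_ _ | r IHr ge_n].
    by rewrite pent1 alt_largest_lt2 //; ring.
  have /andP [lt_pp lt_ppS] := pent_pentp_lt r; have ltS := pentS r.+1.
  have prev : pent r.+1 <= (pent r.+2).-1 < pent r.+2 by apply/andP; split; lia.
  rewrite alt_largest_pent // ?(IHr _ _ _ prev) // ?ifN -?leqNgt; try lia.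
  rewrite (@signr_mod2 _ _ r.+1) ?exprS ?mulN1r; [ring | rewrite pentpE; lia].
have [lt_p | ge_p] := ltnP n (pentp r.+1).
  have reg : pent r.+1 <= n <= N by lia.
  have [_ ->] := alt_gap reg (not_pentagonal_gap (leqnn _) lt_n (or_introl lt_p)).
  by rewrite A_pent.
have A_pentp : A (pentp r.+1) = ((-1) ^+ r)%R.
  rewrite alt_largest_pentp //; last lia.
  have reg : pent r.+1 <= (pentp r.+1).-1 <= N by lia.
  have lt_p : (pentp r.+1).-1 < pentp r.+1 by lia.
  have [_ ->] := alt_gap reg (not_pentagonal_gap (leqnn _) (ltn_trans lt_p lt_pS) (or_introl lt_p)).
  rewrite A_pent (_ : (pentp r.+1).-1 - pent r.+1 = r) ?exprS; last lia.
  by rewrite -signr_odd; case: (odd r) => /=; ring.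
have reg : pentp r.+1 <= n <= N by lia.
have [_ ->] := alt_gap reg (not_pentagonal_gap (ltnW lt_ppS) lt_n (or_intror (leqnn _))).
by rewrite A_pentp exprD exprS; ring.
Qed.

Lemma alt_diff_bound n : 0 < n <= N -> (`|A n - D n.-1| <= 2)%R.
Proof.
case/andP => n_gt0 nN; have [r reg_n] := pent_region n; have /andP [ge_n lt_n] := reg_n.
have r_gt0 : 0 < r by case: r {reg_n} ge_n lt_n => //; rewrite pent1; lia.
have lt_pp := pentp_lt_pentS r.-1; rewrite prednK // in lt_pp.
rewrite (alt_largest_closed r_gt0 nN reg_n).
have [lt_p | ge_p] := ltnP n (pentp r).
  have [n_pent | ne_pent] := eqVneq n (pent r).
    have reg_pred : pent r.-1 <= n.-1 < pent r.-1.+1.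
      by have := pentS r.-1; rewrite prednK // n_pent; lia.
    rewrite (alt_length_closed _ reg_pred) ?ifN -?leqNgt; [| lia | lia].
    have sign_r : ((-1) ^+ r = - (-1) ^+ r.-1 :> int)%R by rewrite -{1}(prednK r_gt0) exprS mulN1r.
    by rewrite n_pent subnn expr0 mul1r sign_r opprK addrK normrN normr1; lia.
  have reg_pred : pent r <= n.-1 < pent r.+1 by lia.
  rewrite (alt_length_closed _ reg_pred) ?ifT; [| lia | lia].
  by rewrite subr0 normrM normr_sign mul1r -signr_odd; case: odd; rewrite ?expr1 ?expr0; lia.
apply: le_trans (ler_normB _ _) _; rewrite normrN normr_sign.
have [r' reg_pred] := pent_region n.-1.
by rewrite (alt_length_closed _ reg_pred); [case: ifP; rewrite ?normr0 ?normr_sign | ]; lia.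
Qed.

Lemma alt_diff_zero r : odd r -> 1 < r -> (pent r).+1 <= N -> A (pent r).+1 = D (pent r).
Proof.
move=> odd_r r_gt1 rN; have lt_p : (pent r).+1 < pentp r by rewrite pentpE; lia.
have reg : pent r <= (pent r).+1 < pent r.+1 by rewrite pentS; lia.
have reg0 : pent r <= pent r < pent r.+1 by rewrite pentS; lia.
rewrite (alt_largest_closed (ltnW r_gt1) rN reg) (alt_length_closed _ reg0); last lia.
rewrite ifT; last exact: lt_p.
rewrite ifT; last exact: ltnW lt_p.
by rewrite subSnn expr1 -(signr_odd _ r) odd_r expr1 subrr mulr0.
Qed.

End ClosedForms.

Lemma Me_sub_Mo_sign n :
  (Posz (Me n) - Posz (Mo n) = \sum_(S in dpart n) (-1) ^+ `|dcrank S|%N :> int)%R.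
Proof.
rewrite (bigID (@crank_even n)) /=; congr (_ + _)%R.
  rewrite -natz /Me -sumr_const; apply: eq_big => [S | S]; rewrite inE //.
  by rewrite /crank_even -signr_odd => /andP [_ /negbTE ->].
rewrite -natz /Mo -sumr_const -sumrN; apply: eq_big => [S | S]; rewrite inE //.
by rewrite /crank_even -signr_odd => /andP [_ /negbNE ->].
Qed.

Section RemoveOne.

Variable n : nat.
Implicit Types S T : {set 'I_n.+2}.

Lemma has_oneE S : has_one S = has_part S 1.
Proof.
apply/existsP/idP => [[i /andP [Si /eqP <-]] | S1]; first by rewrite has_part_val.
by exists (inord 1); rewrite has_part_inord //= inordK.
Qed.

Lemma dpartE S : (S \in dpart n.+1) = ~~ has_part S 0 && (weight S == n.+1).
Proof. by rewrite inE -(has_part_val S ord0). Qed.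

Lemma dpart_no_one S : ((S \in dpart n.+1) && ~~ has_one S) = dpart_gt1 n.+1 S && (S != set0).
Proof.
rewrite dpartE has_oneE /dpart_gt1 parts_gt1E.
case: (eqVneq S set0) => [-> | _]; last by rewrite andbT; lia.
by rewrite weight_set0 !andbF.
Qed.

Lemma sign_crank_no_one S : ~~ has_one S ->
  ((-1) ^+ `|dcrank S|%N = (-1) ^+ largest_part S :> int)%R.
Proof. by rewrite /dcrank => /negbTE ->. Qed.

Lemma odd_absz_succ_sub2 k : odd `|(Posz k.+1 - 2)%R|%N = ~~ odd k.
Proof. by case: k => [|k] //; rewrite (_ : (Posz k.+2 - 2)%R = Posz k) //; lia. Qed.

Lemma sum_with_one :
  (\sum_(S | (S \in dpart n.+1) && has_one S) (-1) ^+ `|dcrank S|%N =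
     - \sum_(T : {set 'I_n.+2} | dpart_gt1 n T) (-1) ^+ #|T| :> int)%R.
Proof.
rewrite -sumrN (@reindex_bij_on _ _ _ _ _ (dpart_gt1 n) (fun T => inord 1 |: T)
  (fun S => S :\ inord 1)).
- apply: eq_bigr => T; rewrite /dpart_gt1 parts_gt1E => /andP [/andP [_ T1] _].
  have -> : dcrank (inord 1 |: T) = (Posz #|T|.+1 - 2)%R.
    by rewrite /dcrank has_oneE has_part_setU1 ?eqxx //= card_setU1_part.
  by rewrite -signr_odd odd_absz_succ_sub2 signrN signr_odd.
- move=> T; rewrite /dpart_gt1 parts_gt1E => /andP [/andP [T0 T1] /eqP weightT].
  by rewrite dpartE has_oneE !has_part_setU1 // T0 weight_setU1 // weightT add1n !eqxx.
- move=> S; rewrite dpartE has_oneE => /andP [/andP [S0 /eqP weightS] S1].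
  move: weightS; rewrite (weight_setD1 S1) => weightS.
  by rewrite /dpart_gt1 parts_gt1E !has_part_setD1 // S0 eqxx /=; apply/eqP; lia.
- move=> T; rewrite /dpart_gt1 parts_gt1E => /andP [/andP [_ T1] _].
  apply: eq_set_parts => x; rewrite has_part_setD1 // has_part_setU1 //.
  by case: (eqVneq x 1) => [-> | //]; rewrite (negbTE T1).
- move=> S /andP [_]; rewrite has_oneE => S1.
  apply: eq_set_parts => x; rewrite has_part_setU1 // has_part_setD1 //.
  by case: (eqVneq x 1) => [-> | ].
Qed.

End RemoveOne.

Lemma Me_sub_Mo n :
  (Posz (Me n.+1) - Posz (Mo n.+1) = alt_largest n.+1 n.+1 - alt_length n.+1 n)%R.
Proof.
rewrite Me_sub_Mo_sign (bigID (@has_one _)) /= addrC sum_with_one; congr (_ - _)%R.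
by apply: eq_big => [S | S]; [exact: dpart_no_one | case/andP => _ /sign_crank_no_one].
Qed.

Theorem corollary1p8 :
  (forall n : nat, (0 < n)%N -> (`|Posz (Me n) - Posz (Mo n)| <= 2)%R) /\
  (forall N : nat, exists n : nat, (N < n)%N /\ Me n = Mo n).
Proof.
split=> [[|n] // _ | M]; first by rewrite Me_sub_Mo; apply: alt_diff_bound; rewrite leqnn.
pose r := M.*2.+3; have odd_r : odd r by rewrite /r /= odd_double.
exists (pent r).+1; split; first by have := pent_ge r; rewrite /r; lia.
have r_gt1 : 1 < r by rewrite /r; lia.
have := Me_sub_Mo (pent r); rewrite (alt_diff_zero odd_r r_gt1 (leqnn _)) subrr.
by move/eqP; rewrite subr_eq0 => /eqP [].
Qed.
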